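(* Let $C$ be a commutative ring and let $R$ be a $C$-algebra satisfying the condition (NK). Then there exist elements $x,y\in R$ such that, letting $S$ be the $C$-subalgebra of $R$ generated by $\{x,y\}$, both $x$ and $y$ are principally nilpotent in $S$ (i.e. $xS$ and $yS$ are nil right ideals of $S$), but $x+y$ is not nilpotent.
   Context: All rings are associative with unit. A $C$-algebra is a ring $R$ together with a subring $C$ contained in the center of $R$. A right ideal is nil if all its elements are nilpotent. A ring satisfies the condition (NK) if it contains two nil right ideals whose sum is not nil. An element $a$ of a ring $R$ is principally nilpotent if the right ideal $aR$ is nil. *)

From HB Require Import structures.
From mathcomp Require Import all_boot all_order all_algebra.
Set Implicit Arguments. Unset Strict Implicit. Unset Printing Implicit Defensive.
Import GRing.Theory.
Local Open Scope ring_scope.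

Definition is_subring (R : pzRingType) (P : R -> Prop) : Prop :=
  [/\ P 1,
      (forall a b, P a -> P b -> P (a - b)) &
      (forall a b, P a -> P b -> P (a * b))].

(* C is a subring of R contained in the center of R: (R, C) is a C-algebra. *)
Definition central_subring (R : pzRingType) (C : R -> Prop) : Prop :=
  is_subring C /\ (forall c r, C c -> c * r = r * c).

Definition nilpotent_elt (R : pzRingType) (x : R) : Prop :=
  exists n : nat, x ^+ n = 0.

Definition right_ideal (R : pzRingType) (I : R -> Prop) : Prop :=
  [/\ I 0,
      (forall a b, I a -> I b -> I (a - b)) &
      (forall a r, I a -> I (a * r))].

Definition nil_set (R : pzRingType) (I : R -> Prop) : Prop :=
  forall a, I a -> nilpotent_elt a.

Definition sum_set (R : pzRingType) (I J : R -> Prop) : R -> Prop :=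
  fun z => exists a b, [/\ I a, J b & z = a + b].

Definition NK (R : pzRingType) : Prop :=
  exists I J : R -> Prop,
    [/\ right_ideal I, right_ideal J, nil_set I, nil_set J
      & ~ nil_set (sum_set I J)].

Definition gen_subalg (R : pzRingType) (C : R -> Prop) (x y : R) : R -> Prop :=
  fun z => forall T : R -> Prop,
    is_subring T -> (forall c, C c -> T c) -> T x -> T y -> T z.

Definition principally_nilpotent_in (R : pzRingType) (S : R -> Prop) (a : R) : Prop :=
  nil_set (fun z => exists s, S s /\ z = a * s).

From HB Require Import structures.
From mathcomp Require Import all_boot all_order all_algebra.
From Stdlib Require Import Classical.
Local Open Scope ring_scope.

(* If [a + b] is not nilpotent with [a] in the nil right ideal [I] and [b] in
   the nil right ideal [J], then [aS] and [bS] lie inside [I] and [J] for any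
   subset [S] whatsoever, so they are nil. *)

Lemma principally_nilpotent_in_nil_right_ideal (R : pzRingType)
    (I S : R -> Prop) (a : R) :
  right_ideal I -> nil_set I -> I a -> principally_nilpotent_in S a.
Proof. by case=> _ _ IM nI Ia w [s [_ ->]]; apply/nI/IM. Qed.

Lemma not_nil_sum_set (R : pzRingType) (I J : R -> Prop) :
  ~ nil_set (sum_set I J) ->
  exists a b, [/\ I a, J b & ~ nilpotent_elt (a + b)].
Proof.
move=> not_nil; apply: NNPP => no_witness; apply: not_nil => _ [a [b [Ia Jb ->]]].
by apply: NNPP => not_nilp; apply: no_witness; exists a, b.
Qed.

Theorem mainTheorem1 (R : pzRingType) (C : R -> Prop) :
  central_subring C -> NK R ->
  exists x y : R,
    [/\ principally_nilpotent_in (gen_subalg C x y) x,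
        principally_nilpotent_in (gen_subalg C x y) y
      & ~ nilpotent_elt (x + y)].
Proof.
move=> _ [I [J [idI idJ nilI nilJ /not_nil_sum_set [a [b [Ia Jb not_nilp]]]]]].
exists a, b; split=> //.
- exact: principally_nilpotent_in_nil_right_ideal idI nilI Ia.
- exact: principally_nilpotent_in_nil_right_ideal idJ nilJ Jb.
Qed.
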